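(* Let $(\mathscr{C},\otimes,I)$ be a monoidal category with finite limits and countable colimits such that for every object $C$ the functors $-\otimes C$ and $C\otimes-$ preserve reflexive coequalizers and colimits of countable chains. If $q:B\to C$ and $q':B\to C'$ are regular epimorphisms in $\mathscr{C}$, then their cointersection, i.e. the pushout square $r\circ q=r'\circ q'$ with $r:C\to D$, $r':C'\to D$, is preserved by tensoring on either side: for every object $E$, the squares obtained by applying $E\otimes-$ and $-\otimes E$ are again pushouts.
   Context: A regular epimorphism is a morphism which is the coequalizer of some pair of parallel morphisms. A pair of parallel morphisms is reflexive if it has a common section. *)

From Stdlib Require Import List.

Record Category := {
  ob :> Type;
  hom : ob -> ob -> Type;
  comp : forall a b c : ob, hom b c -> hom a b -> hom a c;
  idm : forall a : ob, hom a a;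
  comp_id_l : forall a b (f : hom a b), comp a b b (idm b) f = f;
  comp_id_r : forall a b (f : hom a b), comp a a b f (idm a) = f;
  comp_assoc : forall a b c d (f : hom c d) (g : hom b c) (h : hom a b),
      comp a c d f (comp a b c g h) = comp a b d (comp b c d f g) h
}.
Arguments hom {C} : rename.
Arguments comp {C a b c} : rename.
Arguments idm {C} : rename.

Notation "g ∘ f" := (comp g f) (at level 40, left associativity).

Record MonoidalCategory := {
  cat :> Category;
  tens : cat -> cat -> cat;
  tensm : forall a b c d : cat, hom a b -> hom c d -> hom (tens a c) (tens b d);
  munit : cat;
  assoc : forall a b c : cat, hom (tens (tens a b) c) (tens a (tens b c));
  assoc_inv : forall a b c : cat, hom (tens a (tens b c)) (tens (tens a b) c);
  lunit : forall a : cat, hom (tens munit a) a;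
  lunit_inv : forall a : cat, hom a (tens munit a);
  runit : forall a : cat, hom (tens a munit) a;
  runit_inv : forall a : cat, hom a (tens a munit);
  tensm_id : forall a c, tensm a a c c (idm a) (idm c) = idm (tens a c);
  tensm_comp : forall a b e c d g (f : hom a b) (f' : hom b e) (h : hom c d) (h' : hom d g),
      tensm a e c g (f' ∘ f) (h' ∘ h) = tensm b e d g f' h' ∘ tensm a b c d f h;
  assoc_iso1 : forall a b c, assoc_inv a b c ∘ assoc a b c = idm _;
  assoc_iso2 : forall a b c, assoc a b c ∘ assoc_inv a b c = idm _;
  lunit_iso1 : forall a, lunit_inv a ∘ lunit a = idm _;
  lunit_iso2 : forall a, lunit a ∘ lunit_inv a = idm _;
  runit_iso1 : forall a, runit_inv a ∘ runit a = idm _;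
  runit_iso2 : forall a, runit a ∘ runit_inv a = idm _;
  assoc_nat : forall a a' b b' c c' (f : hom a a') (g : hom b b') (h : hom c c'),
      assoc a' b' c' ∘ tensm _ _ _ _ (tensm _ _ _ _ f g) h
      = tensm _ _ _ _ f (tensm _ _ _ _ g h) ∘ assoc a b c;
  lunit_nat : forall a b (f : hom a b),
      lunit b ∘ tensm _ _ _ _ (idm munit) f = f ∘ lunit a;
  runit_nat : forall a b (f : hom a b),
      runit b ∘ tensm _ _ _ _ f (idm munit) = f ∘ runit a;
  pentagon : forall a b c d,
      tensm _ _ _ _ (idm a) (assoc b c d) ∘ assoc a (tens b c) d
        ∘ tensm _ _ _ _ (assoc a b c) (idm d)
      = assoc a b (tens c d) ∘ assoc (tens a b) c d;
  triangle : forall a b,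
      tensm _ _ _ _ (idm a) (lunit b) ∘ assoc a munit b
      = tensm _ _ _ _ (runit a) (idm b)
}.
Arguments tens {m} : rename.
Arguments tensm {m a b c d} : rename.

Definition ltens {M : MonoidalCategory} (E : M) {a b : M} (f : hom a b)
  : hom (tens E a) (tens E b) := tensm (idm E) f.
Definition rtens {M : MonoidalCategory} (E : M) {a b : M} (f : hom a b)
  : hom (tens a E) (tens b E) := tensm f (idm E).

Record Functor (J C : Category) := {
  fob :> J -> C;
  fmor : forall a b : J, hom a b -> hom (fob a) (fob b);
  fmor_id : forall a, fmor a a (idm a) = idm (fob a);
  fmor_comp : forall a b c (g : hom b c) (f : hom a b),
      fmor a c (g ∘ f) = fmor b c g ∘ fmor a b f
}.
Arguments fob {J C}.
Arguments fmor {J C} F {a b} : rename.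

Definition is_cone {J C : Category} (F : Functor J C) (L : C)
  (p : forall j : J, hom L (F j)) : Prop :=
  forall (a b : J) (u : hom a b), fmor F u ∘ p a = p b.

Definition is_limit {J C : Category} (F : Functor J C) (L : C)
  (p : forall j : J, hom L (F j)) : Prop :=
  is_cone F L p /\
  forall (X : C) (x : forall j : J, hom X (F j)), is_cone F X x ->
    exists h : hom X L, (forall j, p j ∘ h = x j) /\
      forall h' : hom X L, (forall j, p j ∘ h' = x j) -> h' = h.

Definition is_cocone {J C : Category} (F : Functor J C) (L : C)
  (c : forall j : J, hom (F j) L) : Prop :=
  forall (a b : J) (u : hom a b), c b ∘ fmor F u = c a.

Definition is_colimit {J C : Category} (F : Functor J C) (L : C)
  (c : forall j : J, hom (F j) L) : Prop :=
  is_cocone F L c /\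
  forall (X : C) (x : forall j : J, hom (F j) X), is_cocone F X x ->
    exists h : hom L X, (forall j, h ∘ c j = x j) /\
      forall h' : hom L X, (forall j, h' ∘ c j = x j) -> h' = h.

Definition finite_type (T : Type) : Prop := exists l : list T, forall x : T, In x l.
Definition countable_type (T : Type) : Prop :=
  exists f : T -> nat, forall x y, f x = f y -> x = y.

Definition finite_cat (J : Category) : Prop :=
  finite_type (ob J) /\ forall a b : J, finite_type (hom a b).
Definition countable_cat (J : Category) : Prop :=
  countable_type (ob J) /\ forall a b : J, countable_type (hom a b).

Definition has_finite_limits (C : Category) : Prop :=
  forall (J : Category), finite_cat J -> forall F : Functor J C,
    exists (L : C) (p : forall j, hom L (F j)), is_limit F L p.

Definition has_countable_colimits (C : Category) : Prop :=
  forall (J : Category), countable_cat J -> forall F : Functor J C,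
    exists (L : C) (c : forall j, hom (F j) L), is_colimit F L c.

Definition is_coequalizer {C : Category} {X Y Q : C} (f g : hom X Y) (q : hom Y Q) : Prop :=
  q ∘ f = q ∘ g /\
  forall (Z : C) (z : hom Y Z), z ∘ f = z ∘ g ->
    exists h : hom Q Z, h ∘ q = z /\ forall h' : hom Q Z, h' ∘ q = z -> h' = h.

Definition regular_epi {C : Category} {Y Q : C} (q : hom Y Q) : Prop :=
  exists (X : C) (f g : hom X Y), is_coequalizer f g q.

Definition reflexive_pair {C : Category} {X Y : C} (f g : hom X Y) : Prop :=
  exists s : hom Y X, f ∘ s = idm Y /\ g ∘ s = idm Y.

Definition is_pushout {C : Category} {B P P' D : C}
  (q : hom B P) (q' : hom B P') (r : hom P D) (r' : hom P' D) : Prop :=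
  r ∘ q = r' ∘ q' /\
  forall (Z : C) (z : hom P Z) (z' : hom P' Z), z ∘ q = z' ∘ q' ->
    exists h : hom D Z, (h ∘ r = z /\ h ∘ r' = z') /\
      forall h' : hom D Z, h' ∘ r = z /\ h' ∘ r' = z' -> h' = h.

Definition is_chain_colimit {C : Category} (X : nat -> C)
  (x : forall n, hom (X n) (X (S n))) (L : C) (c : forall n, hom (X n) L) : Prop :=
  (forall n, c (S n) ∘ x n = c n) /\
  forall (Z : C) (z : forall n, hom (X n) Z), (forall n, z (S n) ∘ x n = z n) ->
    exists h : hom L Z, (forall n, h ∘ c n = z n) /\
      forall h' : hom L Z, (forall n, h' ∘ c n = z n) -> h' = h.

Definition preserves_reflexive_coequalizers {C : Category}
  (Fo : C -> C) (Fm : forall a b : C, hom a b -> hom (Fo a) (Fo b)) : Prop :=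
  forall (X Y Q : C) (f g : hom X Y) (q : hom Y Q),
    reflexive_pair f g -> is_coequalizer f g q ->
    is_coequalizer (Fm _ _ f) (Fm _ _ g) (Fm _ _ q).

Definition preserves_chain_colimits {C : Category}
  (Fo : C -> C) (Fm : forall a b : C, hom a b -> hom (Fo a) (Fo b)) : Prop :=
  forall (X : nat -> C) (x : forall n, hom (X n) (X (S n))) (L : C)
         (c : forall n, hom (X n) L),
    is_chain_colimit X x L c ->
    is_chain_colimit (fun n => Fo (X n)) (fun n => Fm _ _ (x n)) (Fo L)
                     (fun n => Fm _ _ (c n)).

From Stdlib Require Import List Bool Eqdep_dec IndefiniteDescription.
Import ListNotations.

(* Let K, K' be the kernel pairs of q, q': they are reflexive, and q, q' are their coequalizers.
   The pushout map B -> D is the joint coequalizer of K and K'. A map coequalizes K and K' iff it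
   coequalizes every power (K;K')^(n+1) of their relational composite, and these powers are
   reflexive and increasing, so D is the colimit of the chain of their coequalizers. A functor F
   preserving reflexive coequalizers and chain colimits preserves this presentation of D, and
   functoriality alone shows that a map coequalizing F K and F K' coequalizes every F((K;K')^(n+1)),
   so F D is the joint coequalizer of F K and F K', i.e. the pushout of F q and F q'. *)

Lemma dependent_functional_choice {A : Type} {B : A -> Type} (R : forall a, B a -> Prop) :
  (forall a, exists b, R a b) -> exists f : forall a, B a, forall a, R a (f a).
Proof.
  intros H.
  exists (fun a => proj1_sig (constructive_indefinite_description _ (H a))).
  intros a. exact (proj2_sig (constructive_indefinite_description _ (H a))).
Qed.

Section Universal.
Context {C : Category}.

Lemma coequalizer_epi {X Y Q Z : C} {f g : hom X Y} {q : hom Y Q} (h1 h2 : hom Q Z) :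
  is_coequalizer f g q -> h1 ∘ q = h2 ∘ q -> h1 = h2.
Proof.
  intros [Hq Hu] E.
  destruct (Hu Z (h1 ∘ q)) as [h [_ Hh]].
  { rewrite <- !comp_assoc, Hq. reflexivity. }
  rewrite (Hh h1 eq_refl), (Hh h2 (eq_sym E)). reflexivity.
Qed.

(* When [P Z w] says that [w] coequalizes some given pairs, [e] is their joint coequalizer. *)
Definition is_universal {Y L : C} (P : forall Z : C, hom Y Z -> Prop) (e : hom Y L) : Prop :=
  P L e /\ forall (Z : C) (w : hom Y Z), P Z w ->
    exists h : hom L Z, h ∘ e = w /\ forall h' : hom L Z, h' ∘ e = w -> h' = h.

Lemma is_universal_iff {Y L : C} (P P' : forall Z : C, hom Y Z -> Prop) (e : hom Y L) :
  (forall Z w, P Z w <-> P' Z w) -> is_universal P e -> is_universal P' e.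
Proof.
  intros HP [He Hu]. split; [apply HP, He|].
  intros Z w Hw. apply Hu, HP, Hw.
Qed.

End Universal.

Record span {C : Category} (B : C) := { apex : C; leg1 : hom apex B; leg2 : hom apex B }.
Arguments apex {C B}.
Arguments leg1 {C B}.
Arguments leg2 {C B}.

Definition span_coequalizes {C : Category} {B Z : C} (w : hom B Z) (R : span B) : Prop :=
  w ∘ leg1 R = w ∘ leg2 R.

Definition reflexive_span {C : Category} {B : C} (R : span B) : Prop :=
  reflexive_pair (leg1 R) (leg2 R).

Definition span_le {C : Category} {B : C} (R R' : span B) : Prop :=
  exists e : hom (apex R) (apex R'), leg1 R' ∘ e = leg1 R /\ leg2 R' ∘ e = leg2 R.

Lemma span_coequalizes_le {C : Category} {B Z : C} (w : hom B Z) (R R' : span B) :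
  span_le R R' -> span_coequalizes w R' -> span_coequalizes w R.
Proof.
  intros [e [E1 E2]] H. unfold span_coequalizes.
  rewrite <- E1, <- E2, !comp_assoc, H. reflexivity.
Qed.

Definition span_map {C C' : Category} {B : C} (F : Functor C C') (R : span B) : span (F B) :=
  {| apex := F (apex R); leg1 := fmor F (leg1 R); leg2 := fmor F (leg2 R) |}.

Lemma span_map_le {C C' : Category} {B : C} (F : Functor C C') (R R' : span B) :
  span_le R R' -> span_le (span_map F R) (span_map F R').
Proof.
  intros [e [E1 E2]]. exists (fmor F e). simpl.
  rewrite <- !fmor_comp, E1, E2. split; reflexivity.
Qed.

(* Only the existence of factorizations is ever used, so uniqueness is dropped. *)
Record weak_pullback {C : Category} {X Y Z : C} (f : hom X Z) (g : hom Y Z) := {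
  wpb_ob : C;
  wpb1 : hom wpb_ob X;
  wpb2 : hom wpb_ob Y;
  wpb_comm : f ∘ wpb1 = g ∘ wpb2;
  wpb_factor : forall (W : C) (w1 : hom W X) (w2 : hom W Y), f ∘ w1 = g ∘ w2 ->
    exists h : hom W wpb_ob, wpb1 ∘ h = w1 /\ wpb2 ∘ h = w2
}.
Arguments wpb_ob {C X Y Z f g}.
Arguments wpb1 {C X Y Z f g}.
Arguments wpb2 {C X Y Z f g}.
Arguments wpb_comm {C X Y Z f g}.
Arguments wpb_factor {C X Y Z f g}.

Section SpanComposition.
Context {C : Category}.
Variable pb : forall (X Y Z : C) (f : hom X Z) (g : hom Y Z), weak_pullback f g.

Definition span_comp {B : C} (R R' : span B) : span B :=
  let P := pb _ _ _ (leg2 R) (leg1 R') in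
  {| apex := wpb_ob P; leg1 := leg1 R ∘ wpb1 P; leg2 := leg2 R' ∘ wpb2 P |}.

Lemma reflexive_span_comp {B : C} (R R' : span B) :
  reflexive_span R -> reflexive_span R' -> reflexive_span (span_comp R R').
Proof.
  intros [s [Hs1 Hs2]] [s' [Hs1' Hs2']].
  destruct (wpb_factor (pb _ _ _ (leg2 R) (leg1 R')) B s s') as [h [Hh1 Hh2]].
  { rewrite Hs2, Hs1'. reflexivity. }
  exists h. simpl. rewrite <- !comp_assoc, Hh1, Hh2. split; assumption.
Qed.

Lemma span_le_comp_r {B : C} (R R' : span B) :
  reflexive_span R' -> span_le R (span_comp R R').
Proof.
  intros [s [Hs1 Hs2]].
  destruct (wpb_factor (pb _ _ _ (leg2 R) (leg1 R')) _ (idm _) (s ∘ leg2 R)) as [h [Hh1 Hh2]].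
  { rewrite comp_id_r, comp_assoc, Hs1, comp_id_l. reflexivity. }
  exists h. simpl. rewrite <- !comp_assoc, Hh1, Hh2, comp_assoc, Hs2, comp_id_l, comp_id_r.
  split; reflexivity.
Qed.

Lemma span_le_comp_l {B : C} (R R' : span B) :
  reflexive_span R -> span_le R' (span_comp R R').
Proof.
  intros [s [Hs1 Hs2]].
  destruct (wpb_factor (pb _ _ _ (leg2 R) (leg1 R')) _ (s ∘ leg1 R') (idm _)) as [h [Hh1 Hh2]].
  { rewrite comp_id_r, comp_assoc, Hs2, comp_id_l. reflexivity. }
  exists h. simpl. rewrite <- !comp_assoc, Hh1, Hh2, comp_assoc, Hs1, comp_id_l, comp_id_r.
  split; reflexivity.
Qed.

(* No preservation of pullbacks by [F] is needed: the pullback square only has to commute. *)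
Lemma span_coequalizes_map_comp {C' : Category} (F : Functor C C') {B : C} {Z : C'}
  (w : hom (F B) Z) (R R' : span B) :
  span_coequalizes w (span_map F R) -> span_coequalizes w (span_map F R') ->
  span_coequalizes w (span_map F (span_comp R R')).
Proof.
  unfold span_coequalizes. simpl. intros H H'.
  rewrite !fmor_comp, !comp_assoc, H, <- !comp_assoc, <- !fmor_comp,
    (wpb_comm (pb _ _ _ (leg2 R) (leg1 R'))), !fmor_comp, !comp_assoc, H'.
  reflexivity.
Qed.

(* [span_power R n] is the (n+1)-fold composite of [R] with itself. *)
Fixpoint span_power {B : C} (R : span B) (n : nat) : span B :=
  match n with
  | O => R
  | S m => span_comp (span_power R m) R
  end.

Lemma reflexive_span_power {B : C} (R : span B) :
  reflexive_span R -> forall n, reflexive_span (span_power R n).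
Proof.
  intros HR n. induction n as [|n IH]; simpl; [exact HR|].
  apply reflexive_span_comp; assumption.
Qed.

Lemma span_le_power_succ {B : C} (R : span B) :
  reflexive_span R -> forall n, span_le (span_power R n) (span_power R (S n)).
Proof. intros HR n. apply span_le_comp_r, HR. Qed.

Lemma span_power_coequalizes_iff {C' : Category} (F : Functor C C') {B : C} {Z : C'}
  (K K' : span B) (w : hom (F B) Z) :
  reflexive_span K -> reflexive_span K' ->
  (forall n, span_coequalizes w (span_map F (span_power (span_comp K K') n))) <->
  span_coequalizes w (span_map F K) /\ span_coequalizes w (span_map F K').
Proof.
  intros HK HK'.
  assert (HKK' : span_coequalizes w (span_map F K) -> span_coequalizes w (span_map F K') ->
    span_coequalizes w (span_map F (span_comp K K'))) by apply span_coequalizes_map_comp.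
  split.
  - intros H. specialize (H 0). split.
    + exact (span_coequalizes_le w _ _ (span_map_le F _ _ (span_le_comp_r K K' HK')) H).
    + exact (span_coequalizes_le w _ _ (span_map_le F _ _ (span_le_comp_l K K' HK)) H).
  - intros [H H'] n. induction n as [|n IH]; simpl.
    + exact (HKK' H H').
    + exact (span_coequalizes_map_comp F w _ _ IH (HKK' H H')).
Qed.

Lemma kernel_pair_coequalizer {B Q : C} (q : hom B Q) :
  regular_epi q -> exists K : span B, reflexive_span K /\ is_coequalizer (leg1 K) (leg2 K) q.
Proof.
  intros [X [f [g [Hfg Hu]]]].
  pose (P := pb _ _ _ q q).
  exists {| apex := wpb_ob P; leg1 := wpb1 P; leg2 := wpb2 P |}. split.
  - destruct (wpb_factor P B (idm B) (idm B) eq_refl) as [s [Hs1 Hs2]].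
    exists s. split; assumption.
  - split; [exact (wpb_comm P)|].
    intros Z z Hz. apply Hu.
    destruct (wpb_factor P X f g Hfg) as [t [Ht1 Ht2]].
    rewrite <- Ht1, <- Ht2, !comp_assoc. simpl in Hz. rewrite Hz. reflexivity.
Qed.

End SpanComposition.

Section CoequalizerChain.
Context {C : Category} {Y : C} (R : nat -> span Y) (Q : nat -> C)
  (u : forall n, hom Y (Q n)) (x : forall n, hom (Q n) (Q (S n))).
Hypothesis Hu : forall n, is_coequalizer (leg1 (R n)) (leg2 (R n)) (u n).
Hypothesis Hx : forall n, x n ∘ u n = u (S n).

Lemma factor_through_coequalizers {Z : C} (w : hom Y Z) :
  (forall n, span_coequalizes w (R n)) ->
  exists z : forall n, hom (Q n) Z, forall n, z n ∘ u n = w.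
Proof.
  intros Hw. apply (dependent_functional_choice (fun n (zn : hom (Q n) Z) => zn ∘ u n = w)).
  intros n. destruct (proj2 (Hu n) Z w (Hw n)) as [zn [Hzn _]]. exists zn. exact Hzn.
Qed.

Lemma chain_cocone_comp_const {Z : C} (z : forall n, hom (Q n) Z) :
  (forall n, z (S n) ∘ x n = z n) -> forall n, z n ∘ u n = z 0 ∘ u 0.
Proof.
  intros Hz n. induction n as [|n IH]; [reflexivity|].
  rewrite <- IH, <- (Hz n), <- comp_assoc, Hx. reflexivity.
Qed.

Lemma chain_colimit_iff_universal {L : C} (c : forall n, hom (Q n) L) (e : hom Y L) :
  (forall n, c n ∘ u n = e) ->
  is_chain_colimit Q x L c <-> is_universal (fun Z w => forall n, span_coequalizes w (R n)) e.
Proof.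
  intros Hc.
  assert (Hcoeq : forall n, span_coequalizes e (R n)).
  { intros n. unfold span_coequalizes. rewrite <- (Hc n), <- !comp_assoc, (proj1 (Hu n)).
    reflexivity. }
  split.
  - intros [_ Huniv]. split; [exact Hcoeq|].
    intros Z w Hw.
    destruct (factor_through_coequalizers w Hw) as [z Hz].
    destruct (Huniv Z z) as [h [Hh Hhu]].
    { intros n. apply (coequalizer_epi _ _ (Hu n)).
      rewrite <- comp_assoc, Hx, !Hz. reflexivity. }
    exists h. split.
    + rewrite <- (Hc 0), comp_assoc, Hh. apply Hz.
    + intros h' Hh'. apply Hhu. intros n. apply (coequalizer_epi _ _ (Hu n)).
      rewrite <- comp_assoc, Hc, Hh', Hz. reflexivity.
  - intros [_ Huniv]. split.
    { intros n. apply (coequalizer_epi _ _ (Hu n)).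
      rewrite <- comp_assoc, Hx, !Hc. reflexivity. }
    intros Z z Hz.
    pose proof (chain_cocone_comp_const z Hz) as Hzu.
    destruct (Huniv Z (z 0 ∘ u 0)) as [h [Hh Hhu]].
    { intros n. unfold span_coequalizes. rewrite <- (Hzu n), <- !comp_assoc, (proj1 (Hu n)).
      reflexivity. }
    exists h. split.
    + intros n. apply (coequalizer_epi _ _ (Hu n)).
      rewrite <- comp_assoc, Hc, Hh, (Hzu n). reflexivity.
    + intros h' Hh'. apply Hhu. rewrite <- (Hc 0), comp_assoc, Hh'. reflexivity.
Qed.

End CoequalizerChain.

Lemma pushout_iff_universal {C : Category} {B Q Q' D : C} (K K' : span B)
  (q : hom B Q) (q' : hom B Q') (r : hom Q D) (r' : hom Q' D) :
  is_coequalizer (leg1 K) (leg2 K) q -> is_coequalizer (leg1 K') (leg2 K') q' ->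
  r ∘ q = r' ∘ q' ->
  is_pushout q q' r r' <->
  is_universal (fun Z w => span_coequalizes w K /\ span_coequalizes w K') (r ∘ q).
Proof.
  intros Hq Hq' Hrq. unfold span_coequalizes. split.
  - intros [_ Hpo]. split.
    { split.
      - rewrite <- !comp_assoc, (proj1 Hq). reflexivity.
      - rewrite Hrq, <- !comp_assoc, (proj1 Hq'). reflexivity. }
    intros Z w [Hw Hw'].
    destruct (proj2 Hq Z w Hw) as [v [Hv _]].
    destruct (proj2 Hq' Z w Hw') as [v' [Hv' _]].
    destruct (Hpo Z v v') as [h [[Hh Hh'] Hhu]]. { rewrite Hv, Hv'. reflexivity. }
    exists h. split; [rewrite comp_assoc, Hh; exact Hv|].
    intros k Hk. apply Hhu. split.
    + apply (coequalizer_epi _ _ Hq). rewrite <- comp_assoc, Hk, Hv. reflexivity.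
    + apply (coequalizer_epi _ _ Hq'). rewrite <- comp_assoc, <- Hrq, Hk, Hv'. reflexivity.
  - intros [_ Huniv]. split; [exact Hrq|].
    intros Z z z' Hz.
    destruct (Huniv Z (z ∘ q)) as [h [Hh Hhu]].
    { split.
      - rewrite <- !comp_assoc, (proj1 Hq). reflexivity.
      - rewrite Hz, <- !comp_assoc, (proj1 Hq'). reflexivity. }
    exists h. split; [split|].
    + apply (coequalizer_epi _ _ Hq). rewrite <- comp_assoc. exact Hh.
    + apply (coequalizer_epi _ _ Hq'). rewrite <- comp_assoc, <- Hrq, <- Hz. exact Hh.
    + intros k [Hk Hk']. apply Hhu. rewrite comp_assoc, Hk. reflexivity.
Qed.

(* The walking parallel pair: the two arrows [false -> true] are indexed by [bool]. *)
Definition parallel_hom (a b : bool) : Type :=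
  match a, b with
  | false, false | true, true => unit
  | false, true => bool
  | true, false => Empty_set
  end.

Definition parallel_comp (a b c : bool) :
  parallel_hom b c -> parallel_hom a b -> parallel_hom a c :=
  match a, b, c return parallel_hom b c -> parallel_hom a b -> parallel_hom a c with
  | false, false, false | true, true, true => fun _ _ => tt
  | false, false, true => fun g _ => g
  | false, true, true => fun _ f => f
  | false, true, false | true, true, false => fun g _ => match g with end
  | true, false, _ => fun _ f => match f with end
  end.

Definition parallel_pair_cat : Category.
Proof.
  refine (Build_Category bool parallel_hom parallel_comp
    (fun a => match a with false => tt | true => tt end) _ _ _).
  - intros [|] [|] f; simpl in *; try destruct f; reflexivity.
  - intros [|] [|] f; simpl in *; try destruct f; reflexivity.
  - intros [|] [|] [|] [|] f g h; simpl in *;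
      try destruct f; try destruct g; try destruct h; reflexivity.
Defined.

Lemma parallel_pair_cat_countable : countable_cat parallel_pair_cat.
Proof.
  split.
  - exists (fun b : bool => if b then 1 else 0). intros [|] [|]; simpl; congruence.
  - intros [|] [|]; simpl.
    + exists (fun _ => 0). intros [] []; reflexivity.
    + exists (fun _ => 0). intros [].
    + exists (fun b : bool => if b then 1 else 0). intros [|] [|]; simpl; congruence.
    + exists (fun _ => 0). intros [] []; reflexivity.
Qed.

Definition parallel_pair_diagram {C : Category} {X Y : C} (f g : hom X Y) :
  Functor parallel_pair_cat C.
Proof.
  refine (Build_Functor parallel_pair_cat C (fun b : bool => if b then Y else X)
    (fun a b => match a, b return
        parallel_hom a b -> hom (if a then Y else X) (if b then Y else X) with
      | false, false => fun _ => idm X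
      | true, true => fun _ => idm Y
      | false, true => fun e => if e then f else g
      | true, false => fun e => match e with end
      end) _ _).
  - intros [|]; reflexivity.
  - intros [|] [|] [|] u v; simpl in *;
      try destruct u; try destruct v; simpl; rewrite ?comp_id_l, ?comp_id_r; reflexivity.
Defined.

Lemma coequalizers_of_countable_colimits {C : Category} :
  has_countable_colimits C ->
  forall (X Y : C) (f g : hom X Y), exists (Q : C) (u : hom Y Q), is_coequalizer f g u.
Proof.
  intros H X Y f g.
  destruct (H _ parallel_pair_cat_countable (parallel_pair_diagram f g)) as [L [c [Hc Hu]]].
  exists L, (c true).
  assert (Ef : c true ∘ f = c false) by exact (Hc false true true).
  assert (Eg : c true ∘ g = c false) by exact (Hc false true false).
  split; [exact (eq_trans Ef (eq_sym Eg))|].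
  intros Z z Hz.
  destruct (Hu Z (fun j => match j return hom (parallel_pair_diagram f g j) Z with
                            | true => z | false => z ∘ f end)) as [h [Hh Hhu]].
  { intros [|] [|] e; simpl in *; try destruct e; simpl; rewrite ?comp_id_r; auto. }
  exists h. split; [exact (Hh true)|].
  intros h' Hh'. apply Hhu. intros [|]; [exact Hh'|].
  change (h' ∘ c false = z ∘ f).
  rewrite <- Ef, comp_assoc. exact (f_equal (fun k => k ∘ f) Hh').
Qed.

Inductive cospan_ob := cospan_left | cospan_right | cospan_apex.

Definition cospan_le (a b : cospan_ob) : bool :=
  match a, b with
  | cospan_left, cospan_left | cospan_right, cospan_right | cospan_apex, cospan_apex
  | cospan_left, cospan_apex | cospan_right, cospan_apex => true
  | _, _ => false
  end.

Lemma cospan_le_trans a b c : cospan_le b c = true -> cospan_le a b = true -> cospan_le a c = true.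
Proof. destruct a, b, c; simpl; congruence. Qed.

Lemma cospan_le_refl a : cospan_le a a = true.
Proof. destruct a; reflexivity. Qed.

Lemma bool_eq_irrelevance (x y : bool) (p p' : x = y) : p = p'.
Proof. apply UIP_dec, Bool.bool_dec. Qed.

Definition cospan_cat : Category.
Proof.
  refine (Build_Category cospan_ob (fun a b => cospan_le a b = true)
    (fun a b c g f => cospan_le_trans a b c g f) cospan_le_refl _ _ _);
  intros; apply bool_eq_irrelevance.
Defined.

Lemma cospan_cat_finite : finite_cat cospan_cat.
Proof.
  split.
  - exists [cospan_left; cospan_right; cospan_apex]. intros []; simpl; tauto.
  - intros a b. simpl. destruct (Bool.bool_dec (cospan_le a b) true) as [e|n].
    + exists [e]. intros e'. left. apply bool_eq_irrelevance.
    + exists []. intros e. contradiction.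
Qed.

Definition cospan_diagram {C : Category} {X Y Z : C} (f : hom X Z) (g : hom Y Z) :
  Functor cospan_cat C.
Proof.
  pose (obj := fun j => match j with cospan_left => X | cospan_right => Y | cospan_apex => Z end).
  refine (Build_Functor cospan_cat C obj
    (fun a b => match a, b return cospan_le a b = true -> hom (obj a) (obj b) with
      | cospan_left, cospan_left => fun _ => idm X
      | cospan_right, cospan_right => fun _ => idm Y
      | cospan_apex, cospan_apex => fun _ => idm Z
      | cospan_left, cospan_apex => fun _ => f
      | cospan_right, cospan_apex => fun _ => g
      | _, _ => fun p => False_rect _ (Bool.diff_false_true p)
      end) _ _).
  - intros []; reflexivity.
  - intros [] [] [] u v; simpl in *; try discriminate; rewrite ?comp_id_l, ?comp_id_r; reflexivity.
Defined.

Lemma weak_pullbacks_of_finite_limits {C : Category} :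
  has_finite_limits C ->
  forall (X Y Z : C) (f : hom X Z) (g : hom Y Z), inhabited (weak_pullback f g).
Proof.
  intros H X Y Z f g.
  destruct (H _ cospan_cat_finite (cospan_diagram f g)) as [P [p [Hp Hu]]].
  assert (Ef : f ∘ p cospan_left = p cospan_apex) by exact (Hp cospan_left cospan_apex eq_refl).
  assert (Eg : g ∘ p cospan_right = p cospan_apex) by exact (Hp cospan_right cospan_apex eq_refl).
  constructor. refine {| wpb_ob := P; wpb1 := p cospan_left; wpb2 := p cospan_right |}.
  - exact (eq_trans Ef (eq_sym Eg)).
  - intros W w1 w2 Hw.
    destruct (Hu W (fun j => match j return hom W (cospan_diagram f g j) with
        | cospan_left => w1 | cospan_right => w2 | cospan_apex => f ∘ w1 end)) as [h [Hh _]].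
    { intros [] [] e; simpl in *; try discriminate; rewrite ?comp_id_l; auto. }
    exists h. split; [exact (Hh cospan_left) | exact (Hh cospan_right)].
Qed.

Definition choose_weak_pullbacks {C : Category} (H : has_finite_limits C) :
  forall (X Y Z : C) (f : hom X Z) (g : hom Y Z), weak_pullback f g :=
  fun X Y Z f g =>
    let (P, _) := constructive_indefinite_description (fun _ => True)
      (let (P) := weak_pullbacks_of_finite_limits H X Y Z f g in ex_intro _ P I) in P.

Lemma coequalizer_chain {C : Category}
  (Hcoeq : forall (X Y : C) (f g : hom X Y), exists (Q : C) (u : hom Y Q), is_coequalizer f g u)
  {Y : C} (R : nat -> span Y) :
  (forall n, span_le (R n) (R (S n))) ->
  exists (Q : nat -> C) (u : forall n, hom Y (Q n)) (x : forall n, hom (Q n) (Q (S n))),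
    (forall n, is_coequalizer (leg1 (R n)) (leg2 (R n)) (u n)) /\
    (forall n, x n ∘ u n = u (S n)).
Proof.
  intros HR.
  destruct (dependent_functional_choice (B := fun _ => {Q : C & hom Y Q})
    (fun n Qu => is_coequalizer (leg1 (R n)) (leg2 (R n)) (projT2 Qu))) as [Qu Hu].
  { intros n. destruct (Hcoeq _ _ (leg1 (R n)) (leg2 (R n))) as [Q [u Hu]].
    exists (existT _ Q u). exact Hu. }
  pose (u := fun n => projT2 (Qu n)).
  destruct (dependent_functional_choice (B := fun n => hom (projT1 (Qu n)) (projT1 (Qu (S n))))
    (fun n xn => xn ∘ u n = u (S n))) as [x Hx].
  { intros n. destruct (HR n) as [e [E1 E2]].
    destruct (proj2 (Hu n) _ (u (S n))) as [xn [Hxn _]].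
    { unfold u. rewrite <- E1, <- E2, !comp_assoc, (proj1 (Hu (S n))). reflexivity. }
    exists xn. exact Hxn. }
  exists (fun n => projT1 (Qu n)), u, x. split; assumption.
Qed.

Definition id_functor (C : Category) : Functor C C :=
  {| fob := fun a => a; fmor := fun a b f => f;
     fmor_id := fun a => eq_refl; fmor_comp := fun a b c g f => eq_refl |}.

Theorem pushout_of_regular_epis_preserved {C : Category}
  (Hlim : has_finite_limits C) (Hcolim : has_countable_colimits C) (F : Functor C C)
  (HFrefl : preserves_reflexive_coequalizers (fob F) (fun a b => @fmor _ _ F a b))
  (HFchain : preserves_chain_colimits (fob F) (fun a b => @fmor _ _ F a b))
  {B Q Q' D : C} (q : hom B Q) (q' : hom B Q') (r : hom Q D) (r' : hom Q' D) :
  regular_epi q -> regular_epi q' -> is_pushout q q' r r' ->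
  is_pushout (fmor F q) (fmor F q') (fmor F r) (fmor F r').
Proof.
  intros Hq Hq' Hpo.
  pose (pb := choose_weak_pullbacks Hlim).
  destruct (kernel_pair_coequalizer pb q Hq) as [K [HK HqK]].
  destruct (kernel_pair_coequalizer pb q' Hq') as [K' [HK' HqK']].
  pose (T := span_power pb (span_comp pb K K')).
  assert (HT : forall n, reflexive_span (T n)).
  { apply reflexive_span_power, reflexive_span_comp; assumption. }
  destruct (coequalizer_chain (coequalizers_of_countable_colimits Hcolim) T
    (span_le_power_succ pb _ (reflexive_span_comp pb K K' HK HK'))) as [Qs [u [x [Hu Hx]]]].
  assert (Huniv : is_universal (fun Z w => forall n, span_coequalizes w (T n)) (r ∘ q)).
  { apply (is_universal_iff _ _ _
      (fun Z w => iff_sym (span_power_coequalizes_iff pb (id_functor C) K K' w HK HK'))).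
    apply (pushout_iff_universal K K' q q' r r' HqK HqK' (proj1 Hpo)), Hpo. }
  destruct (factor_through_coequalizers T Qs u Hu (r ∘ q) (proj1 Huniv)) as [d Hd].
  assert (HD : is_chain_colimit Qs x D d).
  { exact (proj2 (chain_colimit_iff_universal T Qs u x Hu Hx d (r ∘ q) Hd) Huniv). }
  apply (pushout_iff_universal (span_map F K) (span_map F K')).
  - exact (HFrefl _ _ _ _ _ q HK HqK).
  - exact (HFrefl _ _ _ _ _ q' HK' HqK').
  - rewrite <- !fmor_comp. f_equal. exact (proj1 Hpo).
  - apply (is_universal_iff _ _ _
      (fun Z w => span_power_coequalizes_iff pb F K K' w HK HK')).
    assert (HFu : forall n, is_coequalizer (leg1 (span_map F (T n))) (leg2 (span_map F (T n)))
      (fmor F (u n))) by (intros n; exact (HFrefl _ _ _ _ _ (u n) (HT n) (Hu n))).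
    assert (HFx : forall n, fmor F (x n) ∘ fmor F (u n) = fmor F (u (S n)))
      by (intros n; rewrite <- fmor_comp, Hx; reflexivity).
    assert (HFd : forall n, fmor F (d n) ∘ fmor F (u n) = fmor F r ∘ fmor F q)
      by (intros n; rewrite <- !fmor_comp, Hd; reflexivity).
    exact (proj1 (chain_colimit_iff_universal _ _ _ _ HFu HFx _ _ HFd) (HFchain _ _ _ _ HD)).
Qed.

Definition left_tensor_functor {M : MonoidalCategory} (E : M) : Functor M M.
Proof.
  refine {| fob := fun a => tens E a; fmor := fun a b f => ltens E f |}.
  - intros a. apply tensm_id.
  - intros a b c g f. unfold ltens. rewrite <- tensm_comp, comp_id_l. reflexivity.
Defined.

Definition right_tensor_functor {M : MonoidalCategory} (E : M) : Functor M M.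
Proof.
  refine {| fob := fun a => tens a E; fmor := fun a b f => rtens E f |}.
  - intros a. apply tensm_id.
  - intros a b c g f. unfold rtens. rewrite <- tensm_comp, comp_id_l. reflexivity.
Defined.

Theorem lemma1 (M : MonoidalCategory)
  (Hlim : has_finite_limits M)
  (Hcolim : has_countable_colimits M)
  (Hrefl : forall E : M,
      preserves_reflexive_coequalizers (fun a => tens a E) (fun a b f => rtens E f) /\
      preserves_reflexive_coequalizers (fun a => tens E a) (fun a b f => ltens E f))
  (Hchain : forall E : M,
      preserves_chain_colimits (fun a => tens a E) (fun a b f => rtens E f) /\
      preserves_chain_colimits (fun a => tens E a) (fun a b f => ltens E f))
  (B C C' D : M) (q : hom B C) (q' : hom B C') (r : hom C D) (r' : hom C' D)
  (Hq : regular_epi q) (Hq' : regular_epi q')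
  (Hpo : is_pushout q q' r r') :
  forall E : M,
    is_pushout (ltens E q) (ltens E q') (ltens E r) (ltens E r') /\
    is_pushout (rtens E q) (rtens E q') (rtens E r) (rtens E r').
Proof.
  intros E. split.
  - exact (pushout_of_regular_epis_preserved Hlim Hcolim (left_tensor_functor E)
      (proj2 (Hrefl E)) (proj2 (Hchain E)) q q' r r' Hq Hq' Hpo).
  - exact (pushout_of_regular_epis_preserved Hlim Hcolim (right_tensor_functor E)
      (proj1 (Hrefl E)) (proj1 (Hchain E)) q q' r r' Hq Hq' Hpo).
Qed.
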